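(* Let $S$ be the Hilbert system whose theorems are obtained, by closing under modus ponens, from all instances of schemas (1)–(8) and (10)–(12) of $C_1$ (that is, all axiom schemas of $C_1$ except the excluded middle schema (9)) together with all instances of the explosion schema $A\to(\neg A\to B)$. Then for a propositional variable $p$, the formula $p\vee\neg p$ is not a theorem of $S$. In other words, in $C_1$ extended by the explosion schema, the excluded middle schema cannot be deleted.
   Context: Formulas are built from propositional variables using the binary connectives $\to,\wedge,\vee$ and the unary connective $\neg$. For a formula $A$, write $A^{\circ}$ for $\neg(A\wedge\neg A)$. da Costa's logic $C_1$ is the Hilbert system whose theorems are obtained from all instances, for arbitrary formulas $A,B,C$, of the following axiom schemas by closing under modus ponens (from $A$ and $A\to B$ infer $B$): (1) $A\to(B\to A)$; (2) $(A\to B)\to((A\to(B\to C))\to(A\to C))$; (3) $(A\wedge B)\to A$; (4) $(A\wedge B)\to B$; (5) $A\to(B\to(A\wedge B))$; (6) $A\to(A\vee B)$; (7) $B\to(A\vee B)$; (8) $(A\to C)\to((B\to C)\to((A\vee B)\to C))$; (9) $A\vee\neg A$ (excluded middle); (10) $\neg\neg A\to A$; (11) $B^{\circ}\to((A\to B)\to((A\to\neg B)\to\neg A))$; (12) $(A^{\circ}\wedge B^{\circ})\to(A\wedge B)^{\circ}$, $(A^{\circ}\wedge B^{\circ})\to(A\vee B)^{\circ}$, and $(A^{\circ}\wedge B^{\circ})\to(A\to B)^{\circ}$. *)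

Inductive form : Type :=
  | Var : nat -> form
  | Imp : form -> form -> form
  | And : form -> form -> form
  | Or  : form -> form -> form
  | Neg : form -> form.

Definition circ (A : form) : form := Neg (And A (Neg A)).

Inductive axS : form -> Prop :=
  | ax1  A B   : axS (Imp A (Imp B A))
  | ax2  A B C : axS (Imp (Imp A B) (Imp (Imp A (Imp B C)) (Imp A C)))
  | ax3  A B   : axS (Imp (And A B) A)
  | ax4  A B   : axS (Imp (And A B) B)
  | ax5  A B   : axS (Imp A (Imp B (And A B)))
  | ax6  A B   : axS (Imp A (Or A B))
  | ax7  A B   : axS (Imp B (Or A B))
  | ax8  A B C : axS (Imp (Imp A C) (Imp (Imp B C) (Imp (Or A B) C)))
  | ax10 A     : axS (Imp (Neg (Neg A)) A)
  | ax11 A B   : axS (Imp (circ B) (Imp (Imp A B) (Imp (Imp A (Neg B)) (Neg A))))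
  | ax12a A B  : axS (Imp (And (circ A) (circ B)) (circ (And A B)))
  | ax12b A B  : axS (Imp (And (circ A) (circ B)) (circ (Or A B)))
  | ax12c A B  : axS (Imp (And (circ A) (circ B)) (circ (Imp A B)))
  | axExp A B  : axS (Imp A (Imp (Neg A) B)).

Inductive thmS : form -> Prop :=
  | thm_ax A : axS A -> thmS A
  | thm_mp A B : thmS A -> thmS (Imp A B) -> thmS B.

From Stdlib Require Import Bool.

(** Proof idea: a two-valued semantics in which every negation is false.
    Variables receive arbitrary truth values, [Imp], [And] and [Or] are read
    classically, and [Neg A] is false whatever [A] is.  Under this reading

    - every instance of (1)-(8) is a classical tautology in its "atoms";
    - (10), (11), (12) and explosion hold because their relevant antecedent
      ([Neg (Neg A)], [circ B], [circ A /\ circ B], resp. [Neg A]) is false;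
    - modus ponens preserves truth, as [Imp] is classical.

    Hence every theorem of [S] is true under every valuation, whereas
    [p \/ ~p] is false as soon as [p] is: both disjuncts are false. *)

Fixpoint ev (v : nat -> bool) (f : form) : bool :=
  match f with
  | Var n => v n
  | Imp a b => implb (ev v a) (ev v b)
  | And a b => ev v a && ev v b
  | Or a b => ev v a || ev v b
  | Neg _ => false
  end.

Lemma axS_valid (v : nat -> bool) (A : form) : axS A -> ev v A = true.
Proof.
  intros Hax; destruct Hax; simpl;
    repeat match goal with |- context [ev v ?X] => destruct (ev v X) end;
    reflexivity.
Qed.

Lemma ev_mp (v : nat -> bool) (A B : form) :
  ev v A = true -> ev v (Imp A B) = true -> ev v B = true.
Proof.
  simpl; intros HA HAB; rewrite HA in HAB; exact HAB.
Qed.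

Lemma thmS_valid (v : nat -> bool) (A : form) : thmS A -> ev v A = true.
Proof.
  induction 1 as [A Hax | A B _ IHA _ IHAB].
  - exact (axS_valid v A Hax).
  - exact (ev_mp v A B IHA IHAB).
Qed.

Theorem mainTheorem3 (p : nat) : ~ thmS (Or (Var p) (Neg (Var p))).
Proof.
  intros Hthm.
  pose proof (thmS_valid (fun _ => false) _ Hthm) as Htrue.
  discriminate Htrue.
Qed.
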